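(* Let $G$ be a graph, $H=G^2$, and $n\ge 1$. Then every induced subgraph of $H$ isomorphic to $K_{1,n}$ is contained in a (not necessarily induced) subgraph of $H$ isomorphic to $(D_n)^2$ or to $(D_n^-)^2$.
   Context: All graphs are finite and simple. For a graph $H$, the square $H^2$ has vertex set $V(H)$, two distinct vertices being adjacent iff their distance in $H$ is at most $2$. $D_n$ is the graph with vertex set $\{v,u_1,\dots,u_n,w_1,\dots,w_n\}$ and edge set $\{vu_i:1\le i\le n\}\cup\{u_iw_i:1\le i\le n\}$ (a subdivided star), and $D_n^-$ is the graph $D_n-w_n$ obtained by deleting the vertex $w_n$. *)

From mathcomp Require Import all_boot.
Set Implicit Arguments. Unset Strict Implicit. Unset Printing Implicit Defensive.

Definition simple_graph (T : finType) (e : rel T) : Prop :=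
  symmetric e /\ irreflexive e.

Definition sq (T : finType) (e : rel T) : rel T :=
  fun x y => (x != y) && (e x y || [exists z, e x z && e z y]).

(* Vertices of D_n: None = v, Some (inl i) = u_i, Some (inr i) = w_i
   (indices i : 'I_n, i.e. 0..n-1 instead of 1..n). *)
Definition DV (n : nat) : finType := option ('I_n + 'I_n).

Definition Dn_adj (n : nat) : rel (DV n) :=
  fun x y =>
    match x, y with
    | None, Some (inl _) => true
    | Some (inl _), None => true
    | Some (inl i), Some (inr j) => i == j
    | Some (inr i), Some (inl j) => i == j
    | _, _ => false
    end.

(* D_n^- = D_n - w_n : remove the vertex w_(n-1) (last index). *)
Definition keepm (n : nat) (x : DV n) : bool :=
  match x with
  | Some (inr i) => (val i).+1 != n
  | _ => true
  end.

Definition DmV (n : nat) : finType := {x : DV n | @keepm n x}.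

Definition Dnm_adj (n : nat) : rel (DmV n) :=
  fun x y => Dn_adj (val x) (val y).

Definition induced_star (T : finType) (eH : rel T) (n : nat)
  (c : T) (l : 'I_n -> T) : Prop :=
  injective l /\ (forall i, l i != c) /\ (forall i, eH c (l i)) /\
  (forall i j, i != j -> ~~ eH (l i) (l j)).

(* The star (c, l) is contained in a (not necessarily induced) subgraph of
   eH isomorphic to the graph (X, eX): there is an injective map phi from X
   into T mapping edges of eX to edges of eH, whose image subgraph contains
   the vertices and the edges of the star. *)
Definition star_in_copy (X : finType) (eX : rel X) (T : finType)
  (eH : rel T) (n : nat) (c : T) (l : 'I_n -> T) : Prop :=
  exists phi : X -> T,
    [/\ injective phi,
        (forall x y, eX x y -> eH (phi x) (phi y)) &
        exists xc, phi xc = c /\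
          forall i, exists xi, phi xi = l i /\ eX xc xi].

From mathcomp Require Import all_boot all_fingroup.
Set Implicit Arguments. Unset Strict Implicit. Unset Printing Implicit Defensive.

(* Every leaf is at
   distance at most 2 from c, so we may choose a G-neighbour [mid i] of c
   with mid i = l_i or mid i adjacent to l_i.  Since distinct leaves are at
   G-distance at least 3, no vertex lies within distance 1 of two leaves;
   hence the mid i are pairwise distinct and at most one leaf is adjacent
   to c in G.
   - If no leaf is adjacent to c, then v |-> c, u_i |-> mid i, w_i |-> l_i
     maps D_n^2 into H injectively and edge-preservingly.
   - If the leaf l_k is adjacent to c, we relabel the leaves so that k is
     the last index; then mid k = l_k is the image of u_k and the same map,
     restricted to D_n^- (where w_k is deleted), embeds (D_n^-)^2 into H. *)

Section Square.
Variables (T : finType) (e : rel T).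

Definition within1 (x y : T) : bool := (x == y) || e x y.

Lemma sq_sym : symmetric e -> symmetric (sq e).
Proof.
move=> e_sym x y; rewrite /sq eq_sym e_sym; congr (_ && (_ || _)).
by apply/existsP/existsP => -[z /andP[xz zy]]; exists z; rewrite e_sym zy e_sym xz.
Qed.

Lemma sq_edge x y : irreflexive e -> e x y -> sq e x y.
Proof.
move=> e_irr exy; rewrite /sq exy andbT.
by apply: contraTneq exy => ->; rewrite e_irr.
Qed.

Lemma sq_path x z y : x != y -> e x z -> e z y -> sq e x y.
Proof.
move=> xy xz zy; rewrite /sq xy; apply/orP; right.
by apply/existsP; exists z; rewrite xz.
Qed.

Definition toward (c y : T) : T :=
  if e c y then y else odflt c [pick z | e c z && e z y].

Lemma toward_spec c y : sq e c y -> e c (toward c y) /\ within1 (toward c y) y.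
Proof.
rewrite /sq /toward /within1 => /andP[_]; case: ifP => [-> _ | _ /= ex].
  by rewrite eqxx.
case: pickP => [z /andP[-> ->] | none]; first by rewrite orbT.
by case/existsP: ex => z; rewrite none.
Qed.

Lemma toward_adj c y : e c y -> toward c y = y.
Proof. by rewrite /toward => ->. Qed.

Lemma sq_induced (P : pred T) (x y : {x | P x}) :
  sq (fun u v : {x | P x} => e (val u) (val v)) x y -> sq e (val x) (val y).
Proof.
rewrite /sq (inj_eq val_inj) => /andP[-> /orP[-> // | /existsP[z /andP[xz zy]]]].
by apply/orP; right; apply/existsP; exists (val z); rewrite xz.
Qed.

End Square.

Section Reindex.
Variables (T : finType) (eH : rel T) (n : nat) (c : T) (l : 'I_n -> T).
Variable s : {perm 'I_n}.

Lemma induced_star_reindex : induced_star eH c l -> induced_star eH c (l \o s).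
Proof.
move=> [l_inj [l_c [c_l far]]]; split; first exact: inj_comp l_inj perm_inj.
split; first by move=> i; apply: l_c.
split; first by move=> i; apply: c_l.
by move=> i j ij; apply: far; rewrite (inj_eq perm_inj).
Qed.

Lemma star_in_copy_reindex (X : finType) (eX : rel X) :
  star_in_copy eX eH c (l \o s) -> star_in_copy eX eH c l.
Proof.
move=> [phi [phi_inj phi_hom [xc [phi_c leaves]]]]; exists phi; split=> //.
exists xc; split=> // i; have [x [phi_x xc_x]] := leaves (s^-1 i)%g.
by exists x; rewrite phi_x /= permKV.
Qed.

End Reindex.

Definition Dn2_adj (n : nat) : rel (DV n) := fun x y =>
  match x, y with
  | None, Some _ | Some _, None => true
  | Some (inl i), Some (inl j) => i != j
  | Some (inl i), Some (inr j) | Some (inr i), Some (inl j) => i == j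
  | _, _ => false
  end.

Lemma sq_Dn_adj_sub (n : nat) (x y : DV n) : sq (@Dn_adj n) x y -> Dn2_adj x y.
Proof.
rewrite /sq => /andP[xy]; case: x y xy => [[i|i]|] [[j|j]|] //= xy.
- by case/orP=> [// | /existsP[[[k|k]|] //= /andP[]]].
- by case/orP=> [// | /existsP[[[k|k]|] //= /andP[]]].
- case/existsP=> [[[k|k]|] //= /andP[/eqP ik /eqP kj]].
  by rewrite ik kj eqxx in xy.
Qed.

Section DnMap.
Variables (T : finType) (eH : rel T) (n : nat) (c : T) (P L : 'I_n -> T).

Definition Dn_map (x : DV n) : T :=
  match x with None => c | Some (inl j) => P j | Some (inr j) => L j end.

(* [K] is the set of vertices of D_n actually used (all of D_n, or D_n^-). *)
Variable K : pred (DV n).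

Lemma Dn_map_inj :
  injective P -> injective L -> (forall j, P j != c) -> (forall j, L j != c) ->
  (forall i j, K (Some (inr j)) -> P i != L j) ->
  {in K &, injective Dn_map}.
Proof.
move=> P_inj L_inj P_c L_c P_L [[i|i]|] [[j|j]|] Kx Ky //=.
- by move/P_inj ->.
- by move=> Pij; have := P_L i j Ky; rewrite Pij eqxx.
- by move=> Pic; have := P_c i; rewrite Pic eqxx.
- by move=> Lij; have := P_L j i Kx; rewrite Lij eqxx.
- by move/L_inj ->.
- by move=> Lic; have := L_c i; rewrite Lic eqxx.
- by move=> cPj; have := P_c j; rewrite cPj eqxx.
- by move=> cLj; have := L_c j; rewrite cLj eqxx.
Qed.

Lemma Dn_map_hom :
  symmetric eH -> (forall j, eH c (P j)) ->
  (forall i j, i != j -> eH (P i) (P j)) -> (forall j, eH c (L j)) ->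
  (forall j, K (Some (inr j)) -> eH (P j) (L j)) ->
  {in K &, forall x y, sq (@Dn_adj n) x y -> eH (Dn_map x) (Dn_map y)}.
Proof.
move=> eH_sym c_P P_P c_L P_L x y Kx Ky /sq_Dn_adj_sub.
case: x y Kx Ky => [[i|i]|] [[j|j]|] Kx Ky //=.
- exact: P_P.
- by move=> /eqP ij; rewrite ij; apply: P_L.
- by rewrite eH_sym c_P.
- by move=> /eqP ij; rewrite eH_sym -ij; apply: P_L.
- by rewrite eH_sym c_L.
Qed.

End DnMap.

Section Star.
Variables (T : finType) (e : rel T) (n : nat) (c : T) (l : 'I_n -> T).
Hypotheses (graph : simple_graph e) (star : induced_star (sq e) c l).

Let e_sym : symmetric e. Proof. by case: graph. Qed.
Let e_irr : irreflexive e. Proof. by case: graph. Qed.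
Let l_inj : injective l. Proof. by case: star. Qed.
Let c_l i : sq e c (l i). Proof. by case: star => _ [_ []]. Qed.

(* Distinct leaves are at distance at least 3 in G, so no vertex is within
   distance 1 of two of them. *)
Lemma near_leaf_unique i j z : within1 e z (l i) -> within1 e z (l j) -> i = j.
Proof.
case: star => _ [_ [_ far]] zi zj; apply/eqP/negPn/negP => ij.
apply: (negP (far i j ij)).
have lij : l i != l j by rewrite (inj_eq l_inj).
move: zi zj; rewrite /within1.
case/orP=> [/eqP -> | zi]; case/orP=> [/eqP zj | zj].
- by rewrite zj eqxx in lij.
- exact: sq_edge.
- by apply: sq_edge; rewrite // e_sym -zj.
- by apply: sq_path zj; rewrite // e_sym.
Qed.

Lemma adj_leaf_unique i j : e c (l i) -> e c (l j) -> i = j.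
Proof. by move=> ci cj; apply: (@near_leaf_unique i j c); rewrite /within1 ?ci ?cj orbT. Qed.

Definition mid (i : 'I_n) : T := toward e c (l i).

Lemma mid_adj i : e c (mid i).
Proof. by case: (toward_spec (c_l i)). Qed.

Lemma mid_near i : within1 e (mid i) (l i).
Proof. by case: (toward_spec (c_l i)). Qed.

Lemma mid_of_adj i : e c (l i) -> mid i = l i.
Proof. exact: toward_adj. Qed.

Lemma mid_inj : injective mid.
Proof.
move=> i j mij; apply: (@near_leaf_unique i j (mid i)); first exact: mid_near.
by rewrite mij mid_near.
Qed.

Lemma mid_neq_c i : mid i != c.
Proof. by apply: contraTneq (mid_adj i) => ->; rewrite e_irr. Qed.

Lemma mid_neq_leaf i j : ~~ e c (l j) -> mid i != l j.
Proof. by apply: contraNneq => <-; apply: mid_adj. Qed.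

Lemma mid_leaf_edge i : ~~ e c (l i) -> e (mid i) (l i).
Proof.
move=> nci; have := mid_near i; rewrite /within1.
by rewrite (negbTE (mid_neq_leaf i nci)).
Qed.

Lemma sq_c_mid i : sq e c (mid i).
Proof. exact: sq_edge (mid_adj i). Qed.

Lemma sq_mid_mid i j : i != j -> sq e (mid i) (mid j).
Proof.
move=> ij; apply: (@sq_path _ _ _ c); first by rewrite (inj_eq mid_inj).
  by rewrite e_sym mid_adj.
exact: mid_adj.
Qed.

Lemma sq_mid_leaf i : ~~ e c (l i) -> sq e (mid i) (l i).
Proof. by move=> nci; apply: sq_edge (mid_leaf_edge nci). Qed.


Lemma star_in_Dn2 : (forall i, ~~ e c (l i)) ->
  star_in_copy (sq (@Dn_adj n)) (sq e) c l.
Proof.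
have [_ [l_c _]] := star; move=> nonadj.
exists (Dn_map c mid l); split.
- apply: in2T (Dn_map_inj (K := predT) _ _ _ _ _) => //.
  + exact: mid_inj.
  + exact: mid_neq_c.
  + by move=> i j _; apply: mid_neq_leaf.
- apply: in2T (Dn_map_hom (K := predT) _ _ _ _ _) => //.
  + exact: sq_sym.
  + exact: sq_c_mid.
  + exact: sq_mid_mid.
  + by move=> j _; apply: sq_mid_leaf.
exists None; split=> // i; exists (Some (inr i)); split=> //.
by apply: (@sq_path _ _ _ (Some (inl i))) => //=; rewrite eqxx.
Qed.

(* Case 2: the last leaf [l k] is adjacent to the centre; then u_k is
   mapped onto it and (D_n^-)^2, in which w_k is missing, embeds. *)
Lemma star_in_Dnm2 k : (val k).+1 = n -> e c (l k) ->
  star_in_copy (sq (@Dnm_adj n)) (sq e) c l.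
Proof.
have [_ [l_c _]] := star; move=> k_last ck.
have kept j : keepm (Some (inr j)) = (j != k).
  rewrite /keepm /=; congr (~~ _); apply/eqP/eqP => [jn | -> //].
  by apply/val_inj/succn_inj; rewrite jn k_last.
have nonadj j : keepm (Some (inr j)) -> ~~ e c (l j).
  by rewrite kept; apply: contra => /(adj_leaf_unique ck) ->.
exists (fun x : DmV n => Dn_map c mid l (val x)); split.
- move=> x y /(Dn_map_inj _ _ _ _ _ (valP x) (valP y)) /val_inj; apply.
  + exact: mid_inj.
  + exact: l_inj.
  + exact: mid_neq_c.
  + exact: l_c.
  + by move=> i j /nonadj; apply: mid_neq_leaf.
- move=> x y /sq_induced; apply: (Dn_map_hom _ _ _ _ _ (valP x) (valP y)).
  + exact: sq_sym.
  + exact: sq_c_mid.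
  + exact: sq_mid_mid.
  + exact: c_l.
  + by move=> j /nonadj; apply: sq_mid_leaf.
exists (exist _ None isT); split=> // i.
have [-> | ik] := eqVneq i k.
  exists (exist _ (Some (inl k)) isT); split; first exact: mid_of_adj.
  by rewrite /sq.
have Ki : keepm (Some (inr i)) by rewrite kept.
exists (exist _ (Some (inr i)) Ki); split=> //.
apply: (@sq_path _ _ _ (exist _ (Some (inl i)) isT)) => //.
by rewrite /Dnm_adj /= eqxx.
Qed.

End Star.

Theorem theorem3 (T : finType) (e : rel T) (n : nat) (c : T) (l : 'I_n -> T) :
  simple_graph e -> 0 < n ->
  induced_star (sq e) c l ->
  star_in_copy (sq (@Dn_adj n)) (sq e) c l \/
  star_in_copy (sq (@Dnm_adj n)) (sq e) c l.
Proof.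
move=> graph n_gt0 star.
have [k ck | nonadj] := pickP (fun k => e c (l k)); last first.
  by left; apply: star_in_Dn2 => // i; rewrite nonadj.
right; have last_lt : n.-1 < n by rewrite ltn_predL.
pose last : 'I_n := Ordinal last_lt.
have last_val : (val last).+1 = n by rewrite prednK.
(* Swap the leaf adjacent to the centre into the last position. *)
pose s := tperm k last.
apply: (star_in_copy_reindex (s := s)).
apply: (star_in_Dnm2 graph (induced_star_reindex s star) last_val).
by rewrite /= tpermR.
Qed.
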